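(* Let $\Omega$ be a causal order on a finite set $E$ and $\underline I=(I_\omega)_{\omega\in E}$ a family of non-empty finite sets. The space of input histories $\mathrm{Hist}(\Omega,\underline I)$ is tight.
   Context: A causal order on $E$ is a preorder $\le_\Omega$; $\downarrow\omega=\{\xi:\xi\le_\Omega\omega\}$. $\mathrm{Hist}(\Omega,\underline I)=\bigcup_{\xi\in E}\prod_{\omega\in\downarrow\xi}I_\omega$, a set of partial functions ordered by restriction ($f\le g$ iff $\mathrm{dom}(f)\subseteq\mathrm{dom}(g)$ and $g|_{\mathrm{dom}(f)}=f$). Compatible = agreeing on common domain; compatible $\mathcal F$ has join $\bigvee\mathcal F$ (union). For a space $\Theta$: $\mathrm{Ext}(\Theta)=\{\bigvee\mathcal F:\emptyset\ne\mathcal F\subseteq\Theta\text{ compatible}\}$, $\mathrm{tips}_\Theta(h)=\mathrm{dom}(h)\setminus\bigcup\{\mathrm{dom}(k):k\in\mathrm{Ext}(\Theta),k<h\}$. $\Theta$ is tight if for every $k\in\mathrm{Ext}(\Theta)$ and every $\omega\in\mathrm{dom}(k)$ there is a unique $h\in\Theta$ with $h\le k$ and $\omega\in\mathrm{tips}_\Theta(h)$. *)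

From mathcomp Require Import all_boot.
Set Implicit Arguments. Unset Strict Implicit. Unset Printing Implicit Defensive.

Section Hist.
Variables (E : finType) (I : E -> finType).

Definition pfun := forall w : E, option (I w).

Definition in_dom (f : pfun) (w : E) : Prop := f w <> None.

(* Restriction order: dom f ⊆ dom g and g agrees with f on dom f. *)
Definition pf_le (f g : pfun) : Prop := forall w, in_dom f w -> g w = f w.
Definition pf_lt (f g : pfun) : Prop := pf_le f g /\ f <> g.

Definition Hist (le : rel E) : pfun -> Prop :=
  fun h => exists xi : E, forall w, in_dom h w <-> le w xi.

Definition compatible (F : pfun -> Prop) : Prop :=
  forall f g, F f -> F g -> forall w, in_dom f w -> in_dom g w -> f w = g w.

Definition is_join (F : pfun -> Prop) (k : pfun) : Prop :=
  (forall w, in_dom k w <-> exists2 f, F f & in_dom f w) /\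
  (forall f, F f -> pf_le f k).

Definition Ext (Theta : pfun -> Prop) : pfun -> Prop :=
  fun k => exists F : pfun -> Prop,
    [/\ (exists f, F f), (forall f, F f -> Theta f), compatible F & is_join F k].

Definition tips (Theta : pfun -> Prop) (h : pfun) (w : E) : Prop :=
  in_dom h w /\ ~ (exists k, [/\ Ext Theta k, pf_lt k h & in_dom k w]).

Definition tight (Theta : pfun -> Prop) : Prop :=
  forall k, Ext Theta k -> forall w, in_dom k w ->
    exists! h, [/\ Theta h, pf_le h k & tips Theta h w].

End Hist.

(* Every member of Ext(Hist) has a down-closed domain, because every history
   does. A history h with tip w has domain exactly ↓w: otherwise its
   restriction to ↓w would be a strictly smaller history still defined at w.
   Hence the unique history below k with tip w is the restriction of k to ↓w. *)
From mathcomp Require Import all_boot.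
From Stdlib Require Import Classical FunctionalExtensionality.

Set Implicit Arguments.
Unset Strict Implicit.

Section PartialFunctions.
Variables (E : finType) (I : E -> finType).

Lemma pf_le_dom_eq (f g : pfun I) :
  pf_le f g -> (forall w, in_dom g w -> in_dom f w) -> f = g.
Proof.
move=> le_fg dom_gf; apply: functional_extensionality_dep => w.
case Egw: (g w) => [x|].
  by rewrite -le_fg //; apply: dom_gf; rewrite /in_dom Egw.
by apply: NNPP => f_w; move: (le_fg w f_w); rewrite Egw => /esym.
Qed.

Lemma pf_le_same_dom (f g k : pfun I) :
  pf_le f k -> pf_le g k -> (forall w, in_dom f w <-> in_dom g w) -> f = g.
Proof.
move=> le_fk le_gk dom_fg; apply: pf_le_dom_eq => [w f_w|w /dom_fg //].
by rewrite -le_gk ?le_fk //; apply/dom_fg.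
Qed.

Lemma Ext_self (Theta : pfun I -> Prop) (h : pfun I) : Theta h -> Ext Theta h.
Proof.
move=> Theta_h; exists (eq^~ h); split=> [|f -> //|f g -> -> //|].
  by exists h.
split=> [w|f -> //]; split=> [h_w|[f -> //]].
by exists h.
Qed.

End PartialFunctions.

Section Histories.
Variables (E : finType) (le : rel E) (I : E -> finType).
Hypothesis le_refl : reflexive le.
Hypothesis le_trans : transitive le.

Definition restr (k : pfun I) (w : E) : pfun I :=
  fun v => if le v w then k v else None.

Lemma in_dom_restr (k : pfun I) w v :
  in_dom (restr k w) v <-> le v w /\ in_dom k v.
Proof. by rewrite /in_dom /restr; case: (le v w); split=> [|[]]. Qed.

Lemma pf_le_restr (k : pfun I) w : pf_le (restr k w) k.
Proof. by move=> v /in_dom_restr [v_w _]; rewrite /restr v_w. Qed.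

Lemma Hist_restr (k : pfun I) w :
  (forall v, le v w -> in_dom k v) -> Hist le (restr k w).
Proof.
move=> down_k; exists w => v; rewrite in_dom_restr.
by split=> [[]|v_w]; last split; auto.
Qed.

Lemma Ext_Hist_down_closed (k : pfun I) w v :
  Ext (Hist le) k -> in_dom k w -> le v w -> in_dom k v.
Proof.
case=> F [_ F_Hist _ [dom_k le_Fk]] /dom_k [f F_f f_w] v_w.
have [xi dom_f] := F_Hist f F_f.
have f_v : in_dom f v by apply/dom_f; apply: le_trans v_w _; apply/dom_f.
by rewrite /in_dom (le_Fk f).
Qed.

Lemma tips_restr (k : pfun I) w :
  Ext (Hist le) k -> in_dom k w -> tips (Hist le) (restr k w) w.
Proof.
move=> Ext_k k_w; split; first by apply/in_dom_restr.
case=> k' [Ext_k' [le_k' ne_k'] k'_w]; apply: ne_k'.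
apply: pf_le_dom_eq le_k' _ => v /in_dom_restr [v_w _].
exact: Ext_Hist_down_closed Ext_k' k'_w v_w.
Qed.

Lemma Hist_tip_dom (h : pfun I) w :
  Hist le h -> tips (Hist le) h w -> forall v, in_dom h v <-> le v w.
Proof.
case=> xi dom_h [h_w no_smaller].
have down_h v : le v w -> in_dom h v.
  by move=> v_w; apply/dom_h; apply: le_trans v_w _; apply/dom_h.
have restr_h : restr h w = h.
  apply: NNPP => ne_h; apply: no_smaller; exists (restr h w).
  split; [exact/Ext_self/Hist_restr | split=> //; exact: pf_le_restr |].
  exact/in_dom_restr.
by move=> v; rewrite -restr_h in_dom_restr; split=> [[]|]; auto.
Qed.

End Histories.

Theorem proposition23 (E : finType) (le : rel E)
  (le_refl : reflexive le) (le_trans : transitive le)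
  (I : E -> finType) (I_nonempty : forall w : E, inhabited (I w)) :
  @tight E I (@Hist E I le).
Proof.
move=> k Ext_k w k_w.
have down_k v : le v w -> in_dom k v by apply: Ext_Hist_down_closed Ext_k k_w.
exists (restr le k w); split.
  split; [exact: Hist_restr | exact: pf_le_restr | exact: tips_restr].
move=> h [Hist_h le_hk tip_h].
apply: pf_le_same_dom (@pf_le_restr _ le _ k w) le_hk _.
move=> v; rewrite in_dom_restr (Hist_tip_dom le_refl le_trans Hist_h tip_h).
by split=> [[]|]; auto.
Qed.
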